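(* Let $x\in\mathbb X$, $\alpha>0$ and $x_\alpha\in R_\alpha(Ax)$. Then $$\gamma_x\Big(\tfrac1\alpha\|Ax-Ax_\alpha\|_{\mathbb Y}\Big)\le\|Ax-Ax_\alpha\|_{\mathbb Y}\le4\gamma_x\Big(\tfrac1{4\alpha}\|Ax-Ax_\alpha\|_{\mathbb Y}\Big).$$
   Context: Standing setting: $\mathbb X$ real Banach space, $\tau$ a topology with $(\mathbb X,\tau)$ locally convex Hausdorff; $\mathcal R:\mathbb X\to(-\infty,\infty]$ proper convex with $\tau$-compact sublevel sets; $\mathbb Y$ real Hilbert space; $A:\mathbb X\to\mathbb Y$ linear, $\tau$-to-weak continuous. $R_\alpha(g):=\operatorname{argmin}_{x\in\mathrm{dom}(\mathcal R)}(\frac1{2\alpha}\|g-Ax\|_{\mathbb Y}^2+\mathcal R(x))$, $\varrho_1(z):=\sup\{\beta^{-1}\|Az-Az_\beta\|_{\mathbb Y}:\beta>0,z_\beta\in R_\beta(Az)\}$. For $r\ge0$ let $B_r:=\{z\in\mathbb X:\varrho_1(z)\le r\}$ (nonempty, since it contains the minimizers of $\mathcal R$) and $\gamma_x(r):=\inf_{z\in B_r}\|Ax-Az\|_{\mathbb Y}$. *)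

From HB Require Import structures.
From mathcomp Require Import all_boot all_order all_algebra.
From mathcomp Require Import all_classical all_reals all_analysis.
Set Implicit Arguments. Unset Strict Implicit. Unset Printing Implicit Defensive.
Import Order.TTheory GRing.Theory Num.Theory.
Import numFieldNormedType.Exports.
Local Open Scope classical_set_scope.
Local Open Scope ring_scope.

Section Defs.
Context {R : realType}.

(** [ip] is an inner product on the normed space [Y] inducing its norm;
    a Hilbert space is then a complete normed space with such an [ip]. *)
Definition inner_product (Y : normedModType R) (ip : Y -> Y -> R) : Prop :=
  [/\ forall y z : Y, ip y z = ip z y,
      forall (a : R) (y1 y2 z : Y), ip (a *: y1 + y2) z = a * ip y1 z + ip y2 z
    & forall y : Y, ip y y = `|y| ^+ 2].

Definition dom {X : Type} (F : X -> \bar R) : set X := [set x | (F x < +oo)%E].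

Definition proper_convex {X : lmodType R} (F : X -> \bar R) : Prop :=
  [/\ exists x, (F x < +oo)%E,
      forall x, F x != -oo%E
    & forall (x y : X) (t : R), 0 < t < 1 ->
        (F (t *: x + (1 - t) *: y)%R <= t%:E * F x + (1 - t)%:E * F y)%E].

Section Tikhonov.
Context {X : lmodType R} {Y : normedModType R} (A : X -> Y) (F : X -> \bar R).

(** Tikhonov functional (evaluated on dom F, where F is finite) *)
Definition tikhonov (alpha : R) (g : Y) (x : X) : R :=
  (2 * alpha)^-1 * `|g - A x| ^+ 2 + fine (F x).

Definition Ralpha (alpha : R) (g : Y) : set X :=
  [set x | dom F x /\ forall z, dom F z -> tikhonov alpha g x <= tikhonov alpha g z].

Definition rho1 (z : X) : \bar R :=
  ereal_sup [set e | exists beta zb, [/\ 0 < beta, Ralpha beta (A z) zb &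
                                      e = (beta^-1 * `|A z - A zb|)%:E]].

Definition Bset (r : R) : set X := [set z | (rho1 z <= r%:E)%E].

Definition gamma (x : X) (r : R) : \bar R :=
  ereal_inf [set (`|A x - A z|)%:E | z in Bset r].

End Tikhonov.
End Defs.

From HB Require Import structures.
From mathcomp Require Import all_boot all_order all_algebra.
From mathcomp Require Import all_classical all_reals all_analysis.
From mathcomp Require Import ring lra.
Set Implicit Arguments. Unset Strict Implicit. Unset Printing Implicit Defensive.
Import Order.TTheory GRing.Theory Num.Theory.
Import numFieldNormedType.Exports.
Local Open Scope classical_set_scope.
Local Open Scope ring_scope.

(* Everything rests on the variational inequality for a Tikhonov minimizer z
   of data g:  alpha^-1 <g - Az, Aw - Az> <= F w - F z  for all w in dom F,
   obtained by comparing z with the convex combinations t w + (1 - t) z and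
   letting t go to 0.  It yields
   - a bound for rho_1: if p is a "subgradient" of F at z in the image of A,
     then every minimizer z_beta of data Az satisfies |Az - Az_beta| <= beta|p|;
     applied to x_alpha with p = alpha^-1 (Ax - Ax_alpha) this shows
     x_alpha in B_{d/alpha}, which is the lower estimate;
   - the non-expansiveness of data |-> A x_alpha.
   For the upper estimate we take z in B_r, a minimizer z_alpha of data Az,
   and use the triangle inequality together with the two facts above.  The
   existence of z_alpha is the direct method of the calculus of variations:
   the Tikhonov functional is lower semicontinuous for the topology of E
   (the data term weakly, F through its compact, hence closed, sublevel
   sets) and thus attains its minimum on a compact sublevel set. *)

Lemma le_of_le_addtM (R : realFieldType) (a b c : R) : 0 <= c ->
  (forall t, 0 < t < 1 -> a <= b + t * c) -> a <= b.
Proof.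
move=> c0 h; apply/ler_addgt0Pr => e e0.
have t0 : 0 < e / (e + c + 1) by rewrite divr_gt0 // ltr_wpDr // ltr_pwDl.
have t1 : e / (e + c + 1) < 1 by rewrite ltr_pdivrMr ?mul1r; lra.
apply: (le_trans (h (e / (e + c + 1)) _)); first by rewrite t0 t1.
by rewrite lerD2l mulrAC ler_pdivrMr; nra.
Qed.

Lemma le_of_sqr_le_mul (R : realDomainType) (n k : R) :
  0 <= n -> 0 <= k -> n ^+ 2 <= k * n -> n <= k.
Proof. by move=> n0 k0; rewrite expr2; nra. Qed.

Section InnerProduct.
Context {R : realType} {Y : normedModType R} (ip : Y -> Y -> R)
  (hip : inner_product ip).

Lemma ipDl y1 y2 z : ip (y1 + y2) z = ip y1 z + ip y2 z.
Proof. by case: hip => _ h _; have := h 1 y1 y2 z; rewrite scale1r mul1r. Qed.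

Lemma ip0l z : ip 0 z = 0.
Proof. by have := ipDl 0 0 z; rewrite addr0; lra. Qed.

Lemma ipZl a y z : ip (a *: y) z = a * ip y z.
Proof. by case: hip => _ h _; rewrite -(addr0 (a *: y)) h ip0l addr0. Qed.

Lemma ipC y z : ip y z = ip z y.
Proof. by case: hip. Qed.

Lemma ipZr a y z : ip y (a *: z) = a * ip y z.
Proof. by rewrite ipC ipZl ipC. Qed.

Lemma ipNl y z : ip (- y) z = - ip y z.
Proof. by rewrite -scaleN1r ipZl mulN1r. Qed.

Lemma ipNr y z : ip y (- z) = - ip y z.
Proof. by rewrite ipC ipNl ipC. Qed.

Lemma ipBl y1 y2 z : ip (y1 - y2) z = ip y1 z - ip y2 z.
Proof. by rewrite ipDl ipNl. Qed.

Lemma ipBr y z1 z2 : ip y (z1 - z2) = ip y z1 - ip y z2.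
Proof. by rewrite ipC ipBl ipC (ipC z2). Qed.

Lemma ipnn y : ip y y = `|y| ^+ 2.
Proof. by case: hip. Qed.

(* Cauchy-Schwarz, derived from the triangle inequality of the norm. *)
Lemma ip_le_norm y z : ip y z <= `|y| * `|z|.
Proof.
have hsq : ip (y + z) (y + z) = ip y y + 2 * ip y z + ip z z.
  by rewrite ipDl (ipC y) (ipC z) !ipDl (ipC z y); ring.
have : `|y + z| ^+ 2 <= (`|y| + `|z|) ^+ 2.
  by rewrite lerXn2r ?nnegrE ?addr_ge0 ?ler_normD.
by move: hsq; rewrite !ipnn => ->; nra.
Qed.

Lemma normB_scale_sqr y u t :
  `|y - t *: u| ^+ 2 = `|y| ^+ 2 - 2 * t * ip y u + t ^+ 2 * `|u| ^+ 2.
Proof.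
rewrite -!ipnn ipBl !ipBr !ipZl !ipZr (ipC u y).
by rewrite expr2; ring.
Qed.

(* Weak lower semicontinuity of the squared norm at y0: a large scalar
   product with y0 forces a large norm. *)
Lemma norm_sqr_gt_of_ip y y0 c : 0 <= c < `|y0| ^+ 2 ->
  (`|y0| ^+ 2 + c) / 2 < ip y y0 -> c < `|y| ^+ 2.
Proof.
move=> /andP[c0 cy0] hy.
have := ip_le_norm y y0; have := normr_ge0 y; have := normr_ge0 y0.
move: cy0 hy; rewrite !expr2; nra.
Qed.

End InnerProduct.

Section Tikhonov.
Context {R : realType} {X : lmodType R} {Y : normedModType R}
  (ip : Y -> Y -> R) (hip : inner_product ip) (A : {linear X -> Y})
  (F : X -> \bar R) (hF : proper_convex F).

(* On its effective domain F is finite, since F never takes the value -oo. *)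
Lemma fine_domE w : dom F w -> F w = (fine (F w))%:E.
Proof.
move=> hw; rewrite fineK // fin_numE; case: hF => _ h _.
by rewrite h /= lt_eqF.
Qed.

Lemma fine_le_tikhonov alpha g w : 0 < alpha -> fine (F w) <= tikhonov A F alpha g w.
Proof.
move=> ha; rewrite /tikhonov lerDr mulr_ge0 ?sqr_ge0 //.
by rewrite invr_ge0 mulr_ge0 // ltW.
Qed.

Lemma dom_convex w z t : dom F w -> dom F z -> 0 < t < 1 ->
  dom F (t *: w + (1 - t) *: z) /\
  fine (F (t *: w + (1 - t) *: z)) <= t * fine (F w) + (1 - t) * fine (F z).
Proof.
move=> hw hz t01.
have hv : (F (t *: w + (1 - t) *: z) <= (t * fine (F w) + (1 - t) * fine (F z))%:E)%E.
  case: hF => _ _ hconv; apply: (le_trans (hconv w z t t01)).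
  by rewrite (fine_domE hw) (fine_domE hz) -!EFinM -EFinD.
have dv : dom F (t *: w + (1 - t) *: z) by apply: (le_lt_trans hv); rewrite ltry.
by split => //; rewrite -lee_fin -fine_domE.
Qed.

Lemma tikhonov_variational alpha g z w : 0 < alpha -> Ralpha A F alpha g z ->
  dom F w -> alpha^-1 * ip (g - A z) (A w - A z) <= fine (F w) - fine (F z).
Proof.
move=> ha [hz hmin] hw.
set y := g - A z; set u := A w - A z.
apply: (@le_of_le_addtM _ _ _ ((2 * alpha)^-1 * `|u| ^+ 2)).
  by rewrite mulr_ge0 // invr_ge0; lra.
move=> t /andP[t0 t1].
have [dv fv] := dom_convex hw hz (introT andP (conj t0 t1)).
have := hmin _ dv; rewrite /tikhonov.
have -> : g - A (t *: w + (1 - t) *: z) = y - t *: u.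
  rewrite linearD !linearZ /y /u /= scalerBl scale1r scalerN scalerBr.
  by rewrite !opprD !opprK !addrA; congr (_ + _); rewrite addrAC.
rewrite (normB_scale_sqr hip) -/y invfM.
move: fv; set a := alpha^-1; set P := ip y u => fv hT.
suff : t * (a * P) <= t * (fine (F w) - fine (F z) + t * (2^-1 * a * `|u| ^+ 2)).
  by rewrite (ler_pM2l t0).
lra.
Qed.

Lemma residual_le_subgradient beta z p zb : 0 < beta -> dom F z ->
  (forall w, dom F w -> ip p (A w - A z) <= fine (F w) - fine (F z)) ->
  Ralpha A F beta (A z) zb -> `|A z - A zb| <= beta * `|p|.
Proof.
move=> hb dz hp hzb.
have h1 := tikhonov_variational hb hzb dz.
have h2 := hp _ (proj1 hzb).
rewrite -[A zb - A z]opprB (ipNr hip) in h2; rewrite (ipnn hip) in h1.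
set v := A z - A zb in h1 h2 *.
apply: le_of_sqr_le_mul; first exact: normr_ge0.
  by rewrite mulr_ge0 ?normr_ge0 ?ltW.
rewrite -mulrA -ler_pdivrMl //.
by apply: le_trans (ip_le_norm hip p v); lra.
Qed.

Lemma minimizer_in_B alpha x xa : 0 < alpha -> Ralpha A F alpha (A x) xa ->
  Bset A F (alpha^-1 * `|A x - A xa|) xa.
Proof.
move=> ha hxa; rewrite /Bset /= /rho1.
apply: ge_ereal_sup => _ [beta [zb [hb hzb ->]]]; rewrite lee_fin.
have hp w : dom F w ->
    ip (alpha^-1 *: (A x - A xa)) (A w - A xa) <= fine (F w) - fine (F xa).
  by move=> dw; rewrite (ipZl hip); exact: tikhonov_variational.
have := residual_le_subgradient hb (proj1 hxa) hp hzb.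
rewrite normrZ gtr0_norm ?invr_gt0 // => h.
by rewrite ler_pdivrMl // mulrC.
Qed.

Lemma tikhonov_nonexpansive alpha g1 g2 x1 x2 : 0 < alpha ->
  Ralpha A F alpha g1 x1 -> Ralpha A F alpha g2 x2 ->
  `|A x1 - A x2| <= `|g1 - g2|.
Proof.
move=> ha h1 h2.
have k1 := tikhonov_variational ha h1 (proj1 h2).
have k2 := tikhonov_variational ha h2 (proj1 h1).
have : alpha^-1 * (ip (g1 - A x1) (A x2 - A x1) + ip (g2 - A x2) (A x1 - A x2)) <= 0.
  by rewrite mulrDr; lra.
rewrite pmulr_rle0 ?invr_gt0 // -[A x2 - A x1]opprB (ipNr hip).
set u := A x1 - A x2.
have -> : - ip (g1 - A x1) u + ip (g2 - A x2) u = `|u| ^+ 2 - ip (g1 - g2) u.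
  by rewrite -(ipnn hip) /u !(ipBl hip); ring.
have := ip_le_norm hip (g1 - g2) u => hcs hle.
by apply: le_of_sqr_le_mul; rewrite ?normr_ge0 //; lra.
Qed.

Lemma residual_le_dist alpha x xa z r : 0 < alpha ->
  Ralpha A F alpha (A x) xa -> (exists za, Ralpha A F alpha (A z) za) ->
  Bset A F r z -> `|A x - A xa| <= 2 * `|A x - A z| + alpha * r.
Proof.
move=> ha hxa [za hza] hz.
have hza_r : alpha^-1 * `|A z - A za| <= r.
  rewrite -lee_fin; apply: le_trans hz; apply: ereal_sup_ubound.
  by exists alpha, za.
have hnexp := tikhonov_nonexpansive ha hxa hza.
have htri : `|A x - A xa| <= `|A x - A z| + `|A z - A za| + `|A za - A xa|.
  have -> : A x - A xa = (A x - A z) + (A z - A za) + (A za - A xa).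
    by rewrite !addrA !subrK.
  by rewrite (le_trans (ler_normD _ _)) // lerD2r ler_normD.
rewrite ler_pdivrMl // in hza_r.
by rewrite (distrC (A za)) in htri; lra.
Qed.

End Tikhonov.

Lemma compact_lsc_min (R : realType) (T : topologicalType) (K : set T)
  (f : T -> R) : compact K -> K !=set0 ->
  (forall p, K p -> forall m, m < f p -> nbhs p [set e | K e -> m < f e]) ->
  exists2 p, K p & forall w, K w -> f p <= f w.
Proof.
move=> cK [k0 Kk0] lsc.
pose B w := [set e | K e /\ f e <= f w].
have FB : Filter (filter_from K B).
  apply: filter_from_filter; first by exists k0.
  move=> i j Ki Kj; have [ij|ji] := leP (f i) (f j).
    by exists i => // e [Ke he]; split; split => //; exact: le_trans he ij.
  by exists j => // e [Ke he]; split; split => //; exact: le_trans he (ltW ji).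
have PB : ProperFilter (filter_from K B).
  by apply: (filter_from_proper FB) => i Ki; exists i.
have [p [Kp clp]] : (K `&` cluster (filter_from K B)) !=set0.
  by apply: cK; exists k0 => // e [].
exists p => // w Kw; rewrite leNgt; apply/negP => hlt.
have [e [[Ke hew] hm]] := clp _ _ (ex_intro2 _ _ w Kw (fun e h => h)) (lsc p Kp _ hlt).
by move: (hm Ke); rewrite ltNge hew.
Qed.

Lemma norm_sqr_lsc (R : realType) (T : topologicalType) (Y : normedModType R)
  (ip : Y -> Y -> R) (hip : inner_product ip) (f : T -> Y)
  (hf : forall y, continuous (fun e => ip (f e) y)) (p : T) (c : R) :
  c < `|f p| ^+ 2 -> nbhs p [set e | c < `|f e| ^+ 2].
Proof.
move=> hc; have [c0|c0] := ltP c 0.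
  by apply: filterS filterT => e _ /=; apply: (lt_le_trans c0); exact: sqr_ge0.
have hlt : (`|f p| ^+ 2 + c) / 2 < ip (f p) (f p) by rewrite (ipnn hip); lra.
apply: filterS (cvgr_gt _ (hf (f p) p) _ hlt) => e /=.
by apply: norm_sqr_gt_of_ip => //; rewrite c0 hc.
Qed.

Section Existence.
Context {R : realType} {X : lmodType R} {E : tvsType R}
  (iota : X -> E) (kappa : E -> X)
  (hik : cancel iota kappa) (hki : cancel kappa iota) (hE : hausdorff_space E)
  (F : X -> \bar R) (hF : proper_convex F)
  (hcomp : forall c : R, compact (iota @` [set x | (F x <= c%:E)%E]))
  {Y : normedModType R} (ip : Y -> Y -> R) (hip : inner_product ip)
  (A : {linear X -> Y})
  (hA : forall z : Y, continuous (fun e : E => ip (A (kappa e)) z)).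

(* Strict superlevel sets of F are open in E, as sublevel sets are compact
   in a Hausdorff space, hence closed. *)
Lemma superlevel_nbhs (c : R) (p : E) : ~ (F (kappa p) <= c%:E)%E ->
  nbhs p [set e | ~ (F (kappa e) <= c%:E)%E].
Proof.
move=> hp.
have hopen := closed_openC (compact_closed hE (@hcomp c)).
have hnp : (~` (iota @` [set x | (F x <= c%:E)%E])) p.
  by move=> [x hx ex]; apply: hp; rewrite -ex hik.
apply: filterS (open_nbhs_nbhs (conj hopen hnp)) => e he hle.
by apply: he; exists (kappa e); rewrite ?hki.
Qed.

Lemma tikhonov_lsc alpha g (p : E) (m : R) : 0 < alpha ->
  dom F (kappa p) -> m < tikhonov A F alpha g (kappa p) ->
  nbhs p [set e | dom F (kappa e) -> m < tikhonov A F alpha g (kappa e)].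
Proof.
move=> ha dp hm; rewrite /tikhonov in hm *.
set d := (2 * alpha)^-1 * `|g - A (kappa p)| ^+ 2 + fine (F (kappa p)) - m.
have dE : d = (2 * alpha)^-1 * `|g - A (kappa p)| ^+ 2 + fine (F (kappa p)) - m
  by [].
have d0 : 0 < d by rewrite dE subr_gt0.
have hQ : `|g - A (kappa p)| ^+ 2 - alpha * d < `|g - A (kappa p)| ^+ 2.
  by rewrite gtrDl oppr_lt0 mulr_gt0.
have hcont y : continuous (fun e => ip (g - A (kappa e)) y).
  have -> : (fun e => ip (g - A (kappa e)) y) = (fun e => ip g y - ip (A (kappa e)) y).
    by apply/funext => e; rewrite (ipBl hip).
  by move=> e; exact: cvgB (cvg_cst _) (@hA y e).
have U2 := norm_sqr_lsc hip hcont hQ.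
have U1 : nbhs p [set e | ~ (F (kappa e) <= (fine (F (kappa p)) - d / 2)%:E)%E].
  by apply: superlevel_nbhs; rewrite (fine_domE hF dp) lee_fin; apply/negP; rewrite -ltNge; lra.
apply: filterS (filterI U1 U2) => e [/= U1e U2e] de.
move: U1e; rewrite (fine_domE hF de) lee_fin => /negP; rewrite -ltNge => U1e.
have : (2 * alpha)^-1 * (`|g - A (kappa p)| ^+ 2 - alpha * d) <
       (2 * alpha)^-1 * `|g - A (kappa e)| ^+ 2.
  by rewrite ltr_pM2l // invr_gt0 mulr_gt0.
have -> : (2 * alpha)^-1 * (`|g - A (kappa p)| ^+ 2 - alpha * d) =
          (2 * alpha)^-1 * `|g - A (kappa p)| ^+ 2 - d / 2.
  by field; rewrite gt_eqF.
lra.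
Qed.

Lemma tikhonov_exists alpha g : 0 < alpha -> exists z, Ralpha A F alpha g z.
Proof.
move=> ha; pose T e := tikhonov A F alpha g (kappa e).
have [x0 dx0] : exists x0, dom F x0 by case: hF.
set c := tikhonov A F alpha g x0.
set K := iota @` [set x | (F x <= c%:E)%E].
have Kdom e : K e -> dom F (kappa e).
  by move=> [x hx <-]; rewrite hik; apply: (le_lt_trans hx); rewrite ltry.
have Kx0 : K (iota x0).
  by exists x0 => //; rewrite /= (fine_domE hF dx0) lee_fin fine_le_tikhonov.
have lsc q : K q -> forall m, m < T q -> nbhs q [set e | K e -> m < T e].
  move=> Kq m hm; apply: filterS (tikhonov_lsc ha (Kdom _ Kq) hm).
  by move=> e he /Kdom; exact: he.
have [p Kp pmin] := compact_lsc_min (@hcomp c) (ex_intro _ _ Kx0) lsc.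
exists (kappa p); split; first exact: Kdom.
move=> w dw; have [hw|hw] := boolP (F w <= c%:E)%E.
  by have := pmin (iota w) (ex_intro2 _ _ w hw erefl); rewrite /T hik.
apply: (le_trans (pmin _ Kx0)); rewrite /T hik -/c.
move: hw; rewrite (fine_domE hF dw) lee_fin -ltNge => hw.
by apply/ltW/(lt_le_trans hw); exact: fine_le_tikhonov.
Qed.

End Existence.

Theorem proposition4p8
  (R : realType) (X : completeNormedModType R)
  (E : tvsType R) (iota : {linear X -> E}) (kappa : E -> X)
  (hik : cancel iota kappa) (hki : cancel kappa iota)
  (hE : hausdorff_space E)
  (F : X -> \bar R) (hF : proper_convex F)
  (hcomp : forall c : R, compact (iota @` [set x | (F x <= c%:E)%E]))
  (Y : completeNormedModType R) (ip : Y -> Y -> R) (hip : inner_product ip)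
  (A : {linear X -> Y})
  (hA : forall z : Y, continuous (fun e : E => ip (A (kappa e)) z))
  (x : X) (alpha : R) (halpha : 0 < alpha)
  (xa : X) (hxa : Ralpha A F alpha (A x) xa) :
  (gamma A F x (alpha^-1 * `|(A x - A xa)%R|) <= (`|(A x - A xa)%R|)%:E
   /\ (`|(A x - A xa)%R|)%:E <= 4%:E * gamma A F x ((4 * alpha)^-1 * `|(A x - A xa)%R|))%E.
Proof.
set d := `|A x - A xa|.
split.
  apply: ereal_inf_lbound; exists xa => //.
  exact: (minimizer_in_B hip hF halpha hxa).
have hgamma : ((d / 4)%:E <= gamma A F x ((4 * alpha)^-1 * d))%E.
  apply: le_ereal_inf_tmp => _ [z hz <-]; rewrite lee_fin.
  have hmin := tikhonov_exists hik hki hE hF hcomp hip hA (A z) halpha.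
  have := residual_le_dist hip hF halpha hxa hmin hz.
  have -> : alpha * ((4 * alpha)^-1 * d) = d / 4 by field; rewrite gt_eqF.
  have dE : d = `|A x - A xa| by [].
  by rewrite dE => h; have := normr_ge0 (A x - A xa); lra.
apply: le_trans (lee_wpmul2l _ hgamma); last by rewrite lee_fin.
by rewrite -EFinM mulrC divfK.
Qed.
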